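(* Let $g(x_0,\dots,x_m)$ be a nonsingular $m$-stage FSR (characteristic function) and $f(x_0,\dots,x_m)=g(x_0,\dots,x_m)\oplus f_3(x_1,\dots,x_{m-1})$, where $f_3:\{0,1\}^{m-1}\to\{0,1\}$. Let $\lambda:\{0,1\}^m\to\{0,1\}$ satisfy: (a) $|\{v\in\Omega_m(c):\lambda(v)=1\}|\le1$ for every $c\in\Omega(g)$; (b) $\lambda(v)\cdot\lambda(v')=0$ for every $v\in\{0,1\}^m$; (c) for every $u\in\{0,1\}^{m-1}$ with $f_3(u)=1$ there is $b\in\{0,1\}$ with $\lambda(b\parallel u)=1$. Let $D$ be the directed graph with vertex set $\Omega(g)$ having an arc from $c_1$ to $c_2$ iff there exists $v\in\Omega_m(c_1)$ with $f_3(\mathrm{lbit}_{m-1}(v))=1$, $\lambda(v)=1$ and $v'\in\Omega_m(c_2)$. If $D$ is acyclic, then: (i) for every $d\in\Omega(f)$ there is a weakly connected component $\mathcal C$ of $D$ such that $\Omega_m(d)=\bigcup_{c\in\mathcal C}\Omega_m(c)$; (ii) if $h$ is a subFSR of $f$, then $\Omega(h)\subseteq\Omega(g)$.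
   Context: An $m$-stage FSR with feedback logic $f_1$ has characteristic function $f(x_0,\dots,x_m)=x_m\oplus f_1(x_0,\dots,x_{m-1})$, state transformation $F(x_0,\dots,x_{m-1})=(x_1,\dots,x_{m-1},f_1(x_0,\dots,x_{m-1}))$, and generates the sequences $s$ with $f(s(t),\dots,s(t+m))=0$ for all $t$; it is nonsingular if $F$ is bijective. A periodic sequence $s$ of least period $p$ determines the cycle $[s(0),\dots,s(p-1)]$ (shifts give the same cycle); $\Omega(f)$ is the set of cycles of sequences generated by $f$, and $\Omega_k(c)=\{(s(i),s((i+1)\bmod p),\dots,s((i+k-1)\bmod p)):0\le i<p\}$. For $v\in\{0,1\}^m$, $v'=v\oplus(1,0,\dots,0)$; $\mathrm{lbit}_{m-1}(v)$ is the vector of the last $m-1$ coordinates of $v$; $b\parallel u$ is concatenation. An $k$-stage FSR $h$ is a subFSR of the $m$-stage FSR $f$ if $k<m$ and every sequence generated by $h$ is generated by $f$. A weakly connected component of a directed graph is a connected component of the underlying undirected graph. *)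

From mathcomp Require Import all_boot.
From Stdlib Require Import Relations.Relation_Operators.
Set Implicit Arguments. Unset Strict Implicit. Unset Printing Implicit Defensive.

(* A k-stage FSR is represented by its feedback logic f1 : {0,1}^k -> {0,1}. *)

Definition state (s : nat -> bool) (t k : nat) : k.-tuple bool :=
  [tuple s (t + j) | j < k].

Definition charfun k (f1 : k.-tuple bool -> bool) (x : k.+1.-tuple bool) : bool :=
  tnth x ord_max (+) f1 [tuple tnth x (widen_ord (leqnSn k) j) | j < k].

Definition generates k (f1 : k.-tuple bool -> bool) (s : nat -> bool) : Prop :=
  forall t, charfun f1 (state s t k.+1) = false.

Definition statetrans k (f1 : k.-tuple bool -> bool) (x : k.-tuple bool)
  : k.-tuple bool :=
  [tuple (if (j.+1 < k)%N then nth false x j.+1 else f1 x) | j < k].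

Definition nonsingular k (f1 : k.-tuple bool -> bool) : Prop :=
  bijective (statetrans f1).

Definition least_period (s : nat -> bool) (p : nat) : Prop :=
  (0 < p)%N /\ (forall t, s (t + p) = s t) /\
  (forall q, (0 < q)%N -> (forall t, s (t + q) = s t) -> (p <= q)%N).

(* cycles are represented by seq bool, identified up to shifts (rotations) *)
Definition same_cycle (c d : seq bool) : Prop := exists i, rot i c = d.

Definition Omega k (f1 : k.-tuple bool -> bool) (c : seq bool) : Prop :=
  exists s p, generates f1 s /\ least_period s p /\ same_cycle (mkseq s p) c.

Definition Omega_k k (c : seq bool) : {set k.-tuple bool} :=
  [set [tuple nth false c ((i + j) %% size c) | j < k] | i : 'I_(size c)].

Definition flip0 k (v : k.+1.-tuple bool) : k.+1.-tuple bool :=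
  cons_tuple (~~ thead v) (behead_tuple v).

Definition lbit k (v : k.+1.-tuple bool) : k.-tuple bool := behead_tuple v.

Definition mid k (x : k.+2.-tuple bool) : k.-tuple bool :=
  [tuple nth false x j.+1 | j < k].

(* arcs of the graph D (m = n+1) *)
Definition Darc n (g1 : n.+1.-tuple bool -> bool) (f3 : n.-tuple bool -> bool)
  (lam : n.+1.-tuple bool -> bool) (c1 c2 : seq bool) : Prop :=
  Omega g1 c1 /\ Omega g1 c2 /\
  exists v, v \in Omega_k n.+1 c1 /\ f3 (lbit v) /\ lam v /\ flip0 v \in Omega_k n.+1 c2.

Definition acyclic (R : seq bool -> seq bool -> Prop) : Prop :=
  forall c, ~ clos_trans (seq bool) R c c.

(* weak connectivity in the underlying undirected graph; representatives of
   the same cycle are the same vertex *)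
Definition weak_conn (R : seq bool -> seq bool -> Prop) : seq bool -> seq bool -> Prop :=
  clos_refl_sym_trans (seq bool) (fun a b => R a b \/ same_cycle a b).

(* Let G and F be the state transformations of g and f, and call a state v
   switching when f3 (lbit v) holds.  As f3 ignores x_0 and g is nonsingular,
   F v = G v' at switching states and F v = G v elsewhere: F is G with the
   successors of v and v' exchanged at every switching pair.  The key fact is
   that each state x is F-connected to G x, i.e. every cycle of g lies inside a
   cycle of f.  It is proved by induction along the acyclic graph D: walking
   from G x along the G-cycle of its lambda-state x, F agrees with G except at
   switching states y <> x, where F y = G y'; by (a) and (c), y' is the
   lambda-state of its own cycle, which precedes the cycle of x in D, so by
   induction F leads from G y' back to y', and F y' = G y resumes the walk.
   Hence the cycles of f are the unions of cycles of g glued along arcs of D,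
   which gives (i).  For (ii), in a sequence of a shorter FSR the bit after an
   m-window only depends on its last m-1 bits, whereas f(v') <> f(v); a
   switching state v of the sequence would put v' on the same cycle of f, hence
   in the same sequence, so no state of it switches and f agrees with g on it. *)

From mathcomp Require Import all_boot zify.
From Stdlib Require Import Relation_Operators Operators_Properties.
Set Implicit Arguments. Unset Strict Implicit. Unset Printing Implicit Defensive.

Lemma connect_cycle_walk (T : finType) (f : T -> T) (e : rel T) x :
  injective f -> (forall y, fconnect f x y -> y != x -> connect e y (f y)) ->
  connect e (f x) x.
Proof.
move=> f_inj walk.
suff walk_to j : j < order f x -> connect e (f x) (iter j.+1 f x).
  by have := walk_to (order f x).-1; rewrite orderSpred (iter_order f_inj); apply.
elim: j => [|j IH] lt_j; first exact: connect0.
apply: connect_trans (IH (ltnW lt_j)) _; rewrite [iter j.+2 f x]iterS.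
apply: walk; first exact: fconnect_iter.
by apply/eqP => eq_x; move: (findex_iter lt_j); rewrite eq_x findex0.
Qed.

Lemma clos_rst_iff A (R : A -> A -> Prop) (P : A -> Prop) :
  (forall a b, R a b -> (P a <-> P b)) ->
  forall a b, clos_refl_sym_trans A R a b -> (P a <-> P b).
Proof. by move=> R_iff a b; elim=> // [x y _ [] | x y z _ [] ? ? _ [] ? ?]; split; auto. Qed.

Lemma connect_clos_rt (T : finType) (e : rel T) A (R : A -> A -> Prop) (f : T -> A) :
  (forall a b, e a b -> R (f a) (f b)) ->
  forall a b, connect e a b -> clos_refl_trans A R (f a) (f b).
Proof.
move=> e_R a b /connectP[p]; elim: p a => [|c p IH] a /=; first by move=> _ ->; apply: rt_refl.
by case/andP=> e_ac /IH c_b /c_b; apply: rt_trans; apply/rt_step/e_R.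
Qed.

Section SwitchedPermutation.

Variables (T : finType) (G F flip : T -> T) (S lam : pred T).

Hypothesis G_inj : injective G.
Hypothesis flipK : involutive flip.
Hypothesis S_flip : forall v, S (flip v) = S v.
Hypothesis F_switch : forall v, F v = if S v then G (flip v) else G v.

Lemma switched_inj : injective F.
Proof.
move=> u w; rewrite !F_switch.
case Su: (S u); case Sw: (S w) => /G_inj eq_uw.
- exact: (can_inj flipK).
- by move: Sw; rewrite -eq_uw S_flip Su.
- by move: Su; rewrite eq_uw S_flip Sw.
- exact: eq_uw.
Qed.

(* The arcs of D, read on states rather than on the cycles containing them. *)
Definition switch_arc : rel T := fun z x =>
  [exists v, [&& fconnect G z v, S v, lam v & fconnect G (flip v) x]].

Hypothesis lam_unique : forall x y, fconnect G x y -> lam x -> lam y -> x = y.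
Hypothesis lam_cover : forall v, S v -> lam v || lam (flip v).
Hypothesis switch_arc_acyclic : forall x z, switch_arc z x -> ~~ connect switch_arc x z.

Let ancestors x := [set u | connect switch_arc u x].

Lemma ancestors_ltn z x : switch_arc z x -> #|ancestors z| < #|ancestors x|.
Proof.
move=> arc_zx; apply: proper_card; apply/properP; split.
  by apply/subsetP => u; rewrite !inE => /connect_trans; apply; apply: connect1.
by exists x; rewrite !inE ?connect0 ?switch_arc_acyclic.
Qed.

Lemma fconnect_switch_lam x : lam x -> fconnect F (G x) x.
Proof.
move: {2}#|ancestors x|.+1 (ltnSn #|ancestors x|) => N.
elim: N x => [//|N IH] x lt_x lam_x.
apply: connect_cycle_walk G_inj _ => y xy neq_yx.
have := F_switch y; case Sy: (S y) => F_y; last by rewrite -F_y fconnect1.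
have nlam_y : ~~ lam y by apply: contra neq_yx => /(lam_unique xy lam_x) ->.
have lam_fy : lam (flip y) by move: (lam_cover Sy); rewrite (negbTE nlam_y).
have arc_fy_x : switch_arc (flip y) x.
  apply/existsP; exists (flip y).
  by rewrite connect0 S_flip Sy lam_fy flipK (fconnect_sym G_inj).
have F_fy : F (flip y) = G y by rewrite F_switch S_flip Sy flipK.
have lt_fy : #|ancestors (flip y)| < N.
  by rewrite -ltnS; apply: leq_trans (ancestors_ltn arc_fy_x) _.
apply: connect_trans (fconnect1 F y) _; rewrite F_y -F_fy.
exact: connect_trans (IH _ lt_fy lam_fy) (fconnect1 F _).
Qed.

Lemma fconnect_switch x : fconnect F x (G x).
Proof.
have := F_switch x; case Sx: (S x) => F_x; last by rewrite -F_x fconnect1.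
have [lam_x | nlam_x] := boolP (lam x).
  by rewrite (fconnect_sym switched_inj) fconnect_switch_lam.
have lam_fx : lam (flip x) by move: (lam_cover Sx); rewrite (negbTE nlam_x).
have F_fx : F (flip x) = G x by rewrite F_switch S_flip Sx flipK.
apply: connect_trans (fconnect1 F x) _; rewrite F_x -F_fx.
exact: connect_trans (fconnect_switch_lam lam_fx) (fconnect1 F _).
Qed.

Lemma fconnect_G_switch x y : fconnect G x y -> fconnect F x y.
Proof. by apply: connect_sub => u _ /eqP <-; apply: fconnect_switch. Qed.

Lemma fconnect_switch_flip x : S x -> fconnect F x (flip x).
Proof.
move=> Sx; apply: connect_trans (fconnect1 F x) _; rewrite F_switch Sx.
by apply: fconnect_G_switch; rewrite (fconnect_sym G_inj) fconnect1.
Qed.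

End SwitchedPermutation.

Lemma tnth_state s t k (j : 'I_k) : tnth (state s t k) j = s (t + j).
Proof. by rewrite /state tnth_mktuple. Qed.

Lemma nth_state s t k j : j < k -> nth false (state s t k) j = s (t + j).
Proof. by move=> ltjk; rewrite -(tnth_nth _ _ (Ordinal ltjk)) tnth_state. Qed.

Lemma charfun_state k (h : k.-tuple bool -> bool) s t :
  charfun h (state s t k.+1) = s (t + k) (+) h (state s t k).
Proof.
rewrite /charfun tnth_state /=; congr (_ (+) h _).
by apply: eq_from_tnth => j; rewrite tnth_mktuple !tnth_state.
Qed.

Lemma generatesP k (h : k.-tuple bool -> bool) s :
  generates h s <-> forall t, s (t + k) = h (state s t k).
Proof.
split=> gen t; last by rewrite charfun_state gen addbb.
by move: (gen t); rewrite charfun_state; case: (s _); case: (h _).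
Qed.

Lemma tnth_statetrans k (h : k.-tuple bool -> bool) x (j : 'I_k) :
  tnth (statetrans h x) j = if j.+1 < k then nth false x j.+1 else h x.
Proof. by rewrite /statetrans tnth_mktuple. Qed.

Lemma nth_statetrans n (h : n.+1.-tuple bool -> bool) x j :
  j < n -> nth false (statetrans h x) j = nth false x j.+1.
Proof.
move=> ltjn; have ltjSn : j < n.+1 by apply: ltnW.
by rewrite -(tnth_nth _ _ (Ordinal ltjSn)) tnth_statetrans /= ltnS ltjn.
Qed.

Section GeneratedSequence.

Variables (k : nat) (h : k.-tuple bool -> bool) (s : nat -> bool).
Hypothesis gen : generates h s.

Lemma state_succ t : state s t.+1 k = statetrans h (state s t k).
Proof.
apply: eq_from_tnth => j; rewrite tnth_statetrans tnth_state.
case: ifP => ltSjk; first by rewrite nth_state // addSnnS.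
have -> : t.+1 + j = t + k by have := ltn_ord j; lia.
by rewrite (proj1 (generatesP h s) gen).
Qed.

Lemma state_iter t : state s t k = iter t (statetrans h) (state s 0 k).
Proof. by elim: t => [//|t IH]; rewrite state_succ IH. Qed.

Lemma fconnect_stateP v :
  reflect (exists t, v = state s t k) (fconnect (statetrans h) (state s 0 k) v).
Proof.
apply: (iffP idP) => [conn|[t ->]]; last by rewrite (state_iter t); apply: fconnect_iter.
by exists (findex (statetrans h) (state s 0 k) v); rewrite state_iter iter_findex.
Qed.

End GeneratedSequence.

Lemma lbit_state s t n : lbit (state s t n.+1) = state s t.+1 n.
Proof.
apply: eq_from_tnth => j; rewrite (tnth_nth false) /= nth_behead.
by rewrite nth_state ?ltnS ?ltn_ord // tnth_state addSnnS.
Qed.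

Lemma generates_window_next k (h : k.-tuple bool -> bool) s m t t' :
  generates h s -> k <= m -> state s t m = state s t' m -> s (t + m) = s (t' + m).
Proof.
move=> /generatesP gen le_km eq_win.
have shift u : u + m = u + (m - k) + k by rewrite -addnA subnK.
rewrite shift gen [in RHS]shift gen; congr h; apply: eq_from_tnth => j.
have lt_j : m - k + j < m by have := ltn_ord j; lia.
by rewrite !tnth_state -!addnA -!(nth_state _ _ lt_j) eq_win.
Qed.

Lemma eq_state s s' t t' k :
  (forall j, s (t + j) = s' (t' + j)) -> state s t k = state s' t' k.
Proof. by move=> eq_ss'; apply: eq_from_tnth => j; rewrite !tnth_state. Qed.

Lemma periodic_mod (s : nat -> bool) p :
  (forall t, s (t + p) = s t) -> forall t, s (t %% p) = s t.
Proof.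
move=> per t; rewrite {2}(divn_eq t p) addnC.
by elim: (t %/ p) => [|q IH]; rewrite ?mul0n ?addn0 // mulSnr addnA per.
Qed.

Definition unroll (c : seq bool) t := nth false c (t %% size c).

Lemma unroll_periodic c t : unroll c (t + size c) = unroll c t.
Proof. by rewrite /unroll modnDr. Qed.

Lemma Omega_k_unroll k c v : 0 < size c ->
  v \in Omega_k k c <-> exists t, v = state (unroll c) t k.
Proof.
move=> c_gt0; split=> [/imsetP[i _ ->]|[t ->]].
  by exists i; apply: eq_from_tnth => j; rewrite !tnth_mktuple.
apply/imsetP; exists (Ordinal (ltn_pmod t c_gt0)) => //=.
apply: eq_from_tnth => j; rewrite !tnth_mktuple /unroll.
by rewrite modnDml.
Qed.

Lemma unroll_rot i c t : i <= size c -> unroll (rot i c) t = unroll c (t + i).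
Proof.
case: c => [|b c'] le_i; first by rewrite /unroll !nth_nil.
set c := b :: c' in le_i *; have c_gt0 : 0 < size c by [].
rewrite /unroll size_rot /rot nth_cat size_drop; have := ltn_pmod t c_gt0.
set u := t %% size c => lt_u.
have -> : (t + i) %% size c = (u + i) %% size c by rewrite modnDml.
case: ltnP => [lt_ui | le_ui].
  by rewrite nth_drop modn_small 1?addnC //; lia.
rewrite nth_take; last by lia.
have -> : u + i = (u - (size c - i)) + size c by lia.
by rewrite modnDr modn_small //; lia.
Qed.

Lemma Omega_k_rot k i c v : v \in Omega_k k (rot i c) <-> v \in Omega_k k c.
Proof.
have [le_i | lt_i] := leqP i (size c); last by rewrite rot_oversize 1?ltnW.
case: c le_i => [//|b c'] le_i; set c := b :: c' in le_i *.
rewrite !Omega_k_unroll ?size_rot //; split=> -[t ->].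
  by exists (t + i); apply: eq_state => j; rewrite unroll_rot // addnAC.
exists (t + (size c - i)); apply: eq_state => j.
rewrite unroll_rot // -unroll_periodic; congr unroll; lia.
Qed.

Lemma Omega_k_periodic k s p v : 0 < p -> (forall t, s (t + p) = s t) ->
  v \in Omega_k k (mkseq s p) <-> exists t, v = state s t k.
Proof.
move=> p_gt0 per; rewrite Omega_k_unroll ?size_mkseq //.
suff eq_s : forall t, unroll (mkseq s p) t = s t.
  by split=> -[t ->]; exists t; apply: eq_state => j; rewrite eq_s.
by move=> t; rewrite /unroll size_mkseq nth_mkseq ?ltn_pmod ?periodic_mod.
Qed.

Lemma Omega_orbit k (h : k.-tuple bool -> bool) c : Omega h c ->
  exists w, forall v, v \in Omega_k k c <-> fconnect (statetrans h) w v.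
Proof.
case=> s [p [gen [[p_gt0 [per _]] [i <-]]]]; exists (state s 0 k) => v.
by rewrite Omega_k_rot Omega_k_periodic //; split=> /(fconnect_stateP gen).
Qed.

Section FSRCycle.

Variables (n : nat) (h : n.+1.-tuple bool -> bool).
Local Notation H := (statetrans h).

Definition fsr_seq x t := nth false (iter t H x) 0.

Definition fsr_cycle x := mkseq (fsr_seq x) (order H x).

Lemma state_fsr_seq x t : state (fsr_seq x) t n.+1 = iter t H x.
Proof.
apply: eq_from_tnth => j; rewrite tnth_state (tnth_nth false) /fsr_seq addnC iterD.
move: (iter t H x) => y; have := ltn_ord j.
elim: (nat_of_ord j) y => [//|i IH] y lt_i.
by rewrite iterSr IH 1?ltnW // nth_statetrans.
Qed.

Lemma generates_fsr_seq x : generates h (fsr_seq x).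
Proof.
apply/generatesP => t; rewrite state_fsr_seq.
have := tnth_statetrans h (iter t H x) ord_max.
by rewrite /= ltnn -iterS -state_fsr_seq tnth_state addSnnS => <-.
Qed.

Hypothesis H_inj : injective H.

Lemma fsr_seq_periodic x t : fsr_seq x (t + order H x) = fsr_seq x t.
Proof. by rewrite /fsr_seq iterD iter_order. Qed.

Lemma Omega_fsr_cycle x : Omega h (fsr_cycle x).
Proof.
exists (fsr_seq x), (order H x); split; first exact: generates_fsr_seq.
split; last by exists 0; rewrite rot0.
split; first exact: order_gt0.
split=> [|q q_gt0 per]; first exact: fsr_seq_periodic.
have iter_q : iter q H x = x.
  rewrite -state_fsr_seq -[RHS](state_fsr_seq x 0).
  by apply: eq_state => j; rewrite add0n addnC per.
rewrite leqNgt; apply/negP => lt_q.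
by move: (findex_iter lt_q); rewrite iter_q findex0; lia.
Qed.

Lemma Omega_k_fsr_cycle x v : (v \in Omega_k n.+1 (fsr_cycle x)) = fconnect H x v.
Proof.
apply/idP/idP => [|conn].
  move/Omega_k_periodic => [||t ->]; [exact: order_gt0 | exact: fsr_seq_periodic |].
  by rewrite state_fsr_seq fconnect_iter.
apply/Omega_k_periodic; [exact: order_gt0 | exact: fsr_seq_periodic |].
by exists (findex H x v); rewrite state_fsr_seq iter_findex.
Qed.

Lemma Omega_k_orbit c u : Omega h c -> u \in Omega_k n.+1 c ->
  forall v, (v \in Omega_k n.+1 c) = fconnect H u v.
Proof.
case/Omega_orbit=> w orbit_w /orbit_w w_u v.
have same_w_u := same_connect (fconnect_sym H_inj) w_u.
by apply/idP/idP => [/orbit_w | u_v]; [rewrite -same_w_u | apply/orbit_w; rewrite same_w_u].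
Qed.

End FSRCycle.

Section Flip.

Variable n : nat.
Implicit Types (u v : n.+1.-tuple bool).

Lemma flip0K : involutive (@flip0 n).
Proof. by case=> [[|b s] ?]; apply: val_inj; rewrite /= ?negbK. Qed.

Lemma lbit_flip0 v : lbit (flip0 v) = lbit v.
Proof. exact: val_inj. Qed.

Lemma flip0_neq v : flip0 v != v.
Proof. by apply/eqP => /(congr1 (@thead n bool)); rewrite theadE; case: (thead v). Qed.

Lemma cons_lbit b v : cons_tuple b (lbit v) = if b == thead v then v else flip0 v.
Proof.
case: eqP => [->|/eqP neq_b]; first by rewrite [RHS]tuple_eta; apply: val_inj.
by apply: val_inj => /=; case: (thead v) neq_b; case: b.
Qed.

Lemma statetrans_lbit (h h' : n.+1.-tuple bool -> bool) u v :
  lbit u = lbit v -> h u = h' v -> statetrans h u = statetrans h' v.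
Proof.
move=> eq_lbit eq_h; apply: eq_from_tnth => j; rewrite !tnth_statetrans eq_h.
by case: ifP => // _; rewrite -!nth_behead -[behead u]/(val (lbit u)) eq_lbit.
Qed.

Lemma nonsingular_flip0 (h : n.+1.-tuple bool -> bool) v :
  injective (statetrans h) -> h (flip0 v) = ~~ h v.
Proof.
move=> inj; suff: h (flip0 v) != h v by case: (h (flip0 v)); case: (h v).
apply: contra (flip0_neq v) => /eqP eq_h.
by apply/eqP/inj/statetrans_lbit; rewrite ?lbit_flip0.
Qed.

End Flip.

Lemma charfun_decomp n (g1 f1 : n.+1.-tuple bool -> bool) (f3 : n.-tuple bool -> bool) :
  (forall x : n.+2.-tuple bool, charfun f1 x = charfun g1 x (+) f3 (mid x)) ->
  forall v, f1 v = g1 v (+) f3 (lbit v).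
Proof.
move=> decomp v; pose x := [tuple of rcons v false].
have init_x : [tuple tnth x (widen_ord (leqnSn n.+1) j) | j < n.+1] = v.
  apply: eq_from_tnth => j; rewrite tnth_mktuple !(tnth_nth false) /=.
  by rewrite nth_rcons size_tuple ltn_ord.
have mid_x : mid x = lbit v.
  apply: eq_from_tnth => j; rewrite tnth_mktuple !(tnth_nth false) /= nth_behead.
  by rewrite nth_rcons size_tuple ltnS ltn_ord.
by move: (decomp x); rewrite /charfun init_x mid_x -addbA => /addbI.
Qed.

Lemma statetrans_switch n (g1 f1 : n.+1.-tuple bool -> bool) (f3 : n.-tuple bool -> bool) :
  injective (statetrans g1) -> (forall v, f1 v = g1 v (+) f3 (lbit v)) ->
  forall v, statetrans f1 v =
            if f3 (lbit v) then statetrans g1 (flip0 v) else statetrans g1 v.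
Proof.
move=> G_inj decomp v; case: ifP => f3_v; apply: statetrans_lbit;
  by rewrite ?lbit_flip0 // decomp f3_v ?nonsingular_flip0 ?addbT ?addbF.
Qed.

Section SwitchedFSR.

Variables (n : nat) (g1 f1 : n.+1.-tuple bool -> bool).
Variables (f3 : n.-tuple bool -> bool) (lam : n.+1.-tuple bool -> bool).

Local Notation G := (statetrans g1).
Local Notation F := (statetrans f1).
Local Notation S := (fun v : n.+1.-tuple bool => f3 (lbit v)).
Local Notation D := (Darc g1 f3 lam).
Local Notation arc := (switch_arc G (@flip0 n) S lam).

Hypothesis G_inj : injective G.
Hypothesis f_decomp : forall v, f1 v = g1 v (+) f3 (lbit v).
Hypothesis lam_once : forall c, Omega g1 c -> #|[set v in Omega_k n.+1 c | lam v]| <= 1.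
Hypothesis lam_cons : forall u : n.-tuple bool, f3 u -> exists b, lam (cons_tuple b u).
Hypothesis D_acyclic : acyclic D.

Let S_flip v : S (flip0 v) = S v. Proof. by rewrite /= lbit_flip0. Qed.
Let F_switch := statetrans_switch G_inj f_decomp.

Lemma lam_unique x y : fconnect G x y -> lam x -> lam y -> x = y.
Proof.
move=> xy lam_x lam_y; apply/eqP; apply: contraT => neq_xy.
have two : [set x; y] \subset [set v in Omega_k n.+1 (fsr_cycle g1 x) | lam v].
  apply/subsetP => u; rewrite !inE (Omega_k_fsr_cycle G_inj).
  by case/orP => /eqP ->; rewrite ?lam_x ?lam_y ?connect0 ?xy.
have := leq_trans (subset_leq_card two) (lam_once (Omega_fsr_cycle G_inj x)).
by rewrite cards2 neq_xy.
Qed.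

Lemma lam_cover v : S v -> lam v || lam (flip0 v).
Proof.
by case/lam_cons => b; rewrite cons_lbit; case: eqP => _ ->; rewrite ?orbT.
Qed.

Lemma Darc_fsr_cycle z x : arc z x -> D (fsr_cycle g1 z) (fsr_cycle g1 x).
Proof.
case/existsP => v /and4P[zv Sv lam_v fv_x].
split; first exact: Omega_fsr_cycle.
split; first exact: Omega_fsr_cycle.
by exists v; rewrite !(Omega_k_fsr_cycle G_inj) (fconnect_sym G_inj x).
Qed.

Lemma switch_arc_acyclic x z : arc z x -> ~~ connect arc x z.
Proof.
move=> arc_zx; apply/negP => /(connect_clos_rt Darc_fsr_cycle) xz.
exact: D_acyclic (clos_rt_t _ _ _ _ _ xz (t_step _ _ _ _ (Darc_fsr_cycle arc_zx))).
Qed.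

Lemma fconnect_G_F x y : fconnect G x y -> fconnect F x y.
Proof.
exact: (fconnect_G_switch G_inj (@flip0K n) S_flip F_switch
          lam_unique lam_cover switch_arc_acyclic).
Qed.

Lemma fconnect_F_flip0 x : S x -> fconnect F x (flip0 x).
Proof.
exact: (fconnect_switch_flip G_inj (@flip0K n) S_flip F_switch
          lam_unique lam_cover switch_arc_acyclic).
Qed.

Lemma Omega_k_F_step c u : Omega g1 c -> u \in Omega_k n.+1 c ->
  exists c', [/\ Omega g1 c', weak_conn D c c' & F u \in Omega_k n.+1 c'].
Proof.
move=> Oc uc; rewrite F_switch; case: ifP => Su; last first.
  by exists c; rewrite (Omega_k_orbit G_inj Oc uc) fconnect1; split=> //; apply: rst_refl.
exists (fsr_cycle g1 (flip0 u)); rewrite (Omega_k_fsr_cycle G_inj) fconnect1.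
have Oc' := Omega_fsr_cycle G_inj (flip0 u); split=> //.
have fu_c' : flip0 u \in Omega_k n.+1 (fsr_cycle g1 (flip0 u)).
  by rewrite (Omega_k_fsr_cycle G_inj) connect0.
case/orP: (lam_cover Su) => [lam_u | lam_fu]; [apply: rst_step | apply/rst_sym/rst_step];
  left; do 2!split=> //.
- by exists u.
- by exists (flip0 u); rewrite lbit_flip0 flip0K.
Qed.

Lemma Omega_k_F_component w v : fconnect F w v ->
  exists c, Omega g1 c /\ weak_conn D (fsr_cycle g1 w) c /\ v \in Omega_k n.+1 c.
Proof.
move=> wv; rewrite -(iter_findex wv); elim: (findex F w v) => [|j [c [Oc [wc vc]]]].
  exists (fsr_cycle g1 w); split; first exact: Omega_fsr_cycle.
  by split; [apply: rst_refl | rewrite /= (Omega_k_fsr_cycle G_inj) connect0].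
have [c' [Oc' cc' vc']] := Omega_k_F_step Oc vc.
by exists c'; do !split=> //; apply: rst_trans cc'.
Qed.

Let in_F_orbit w c := forall v, v \in Omega_k n.+1 c -> fconnect F w v.

Lemma in_F_orbit_flip w c c' x : Omega g1 c' -> x \in Omega_k n.+1 c -> S x ->
  flip0 x \in Omega_k n.+1 c' -> in_F_orbit w c -> in_F_orbit w c'.
Proof.
move=> Oc' xc Sx fx_c' wc v vc'.
apply: connect_trans (connect_trans (wc _ xc) (fconnect_F_flip0 Sx)) _.
by apply: fconnect_G_F; rewrite -(Omega_k_orbit G_inj Oc' fx_c').
Qed.

Lemma weak_conn_in_F_orbit w c c' :
  weak_conn D c c' -> in_F_orbit w c <-> in_F_orbit w c'.
Proof.
apply: clos_rst_iff => a b [[Oa [Ob [x [xa [Sx [_ fxb]]]]]] | [i <-]].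
  split; first exact: in_F_orbit_flip Ob xa Sx fxb.
  by apply: in_F_orbit_flip Oa fxb _ _; rewrite /= ?lbit_flip0 ?flip0K.
by split=> wc v vc; apply: wc; move: vc; rewrite Omega_k_rot.
Qed.

Lemma Omega_F_components d : Omega f1 d ->
  exists c0, Omega g1 c0 /\
    forall v, v \in Omega_k n.+1 d <->
      exists c, Omega g1 c /\ weak_conn D c0 c /\ v \in Omega_k n.+1 c.
Proof.
case/Omega_orbit=> w orbit_w; exists (fsr_cycle g1 w).
split=> [|v]; first exact: Omega_fsr_cycle.
rewrite orbit_w; split=> [|[c [_ [wc vc]]]]; first exact: Omega_k_F_component.
apply: (proj1 (weak_conn_in_F_orbit w wc)) vc => u.
by rewrite (Omega_k_fsr_cycle G_inj); apply: fconnect_G_F.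
Qed.

Lemma subFSR_no_switch k (h1 : k.-tuple bool -> bool) s t :
  k < n.+1 -> generates h1 s -> generates f1 s -> ~~ S (state s t n.+1).
Proof.
move=> lt_k gen_h gen_f; apply/negP => Sv; set v := state s t n.+1 in Sv.
have F_inj : injective F := switched_inj G_inj (@flip0K n) S_flip F_switch.
have /(fconnect_stateP gen_f)[t' fv] : fconnect F (state s 0 n.+1) (flip0 v).
  by apply: connect_trans (fconnect_F_flip0 Sv); apply/(fconnect_stateP gen_f); exists t.
have same_next : s (t.+1 + n) = s (t'.+1 + n).
  by apply: (generates_window_next gen_h) => //; rewrite -!lbit_state -fv lbit_flip0.
move: same_next; rewrite !addSnnS !(proj1 (generatesP _ _) gen_f) -fv.
by rewrite (nonsingular_flip0 v F_inj); case: (f1 v).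
Qed.

Lemma subFSR_Omega k (h1 : k.-tuple bool -> bool) :
  k < n.+1 -> (forall s, generates h1 s -> generates f1 s) ->
  forall c, Omega h1 c -> Omega g1 c.
Proof.
move=> lt_k sub c [s [p [gen_h per_c]]]; exists s, p; split=> //.
have gen_f := sub s gen_h.
apply/generatesP => t; rewrite (proj1 (generatesP _ _) gen_f) f_decomp.
by rewrite (negbTE (subFSR_no_switch t lt_k gen_h gen_f)) addbF.
Qed.

End SwitchedFSR.

Theorem lemma7 (n : nat) (g1 f1 : n.+1.-tuple bool -> bool)
  (f3 : n.-tuple bool -> bool) (lam : n.+1.-tuple bool -> bool) :
  nonsingular g1 ->
  (forall x : n.+2.-tuple bool, charfun f1 x = charfun g1 x (+) f3 (mid x)) ->
  (forall c, Omega g1 c -> (#|[set v in Omega_k n.+1 c | lam v]| <= 1)%N) ->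
  (forall v : n.+1.-tuple bool, lam v && lam (flip0 v) = false) ->
  (forall u : n.-tuple bool, f3 u -> exists b, lam (cons_tuple b u)) ->
  acyclic (Darc g1 f3 lam) ->
  (forall d, Omega f1 d ->
     exists c0, Omega g1 c0 /\
       forall v, v \in Omega_k n.+1 d <->
         exists c, Omega g1 c /\ weak_conn (Darc g1 f3 lam) c0 c /\ v \in Omega_k n.+1 c)
  /\
  (forall k (h1 : k.-tuple bool -> bool), (k < n.+1)%N ->
     (forall s, generates h1 s -> generates f1 s) ->
     forall c, Omega h1 c -> Omega g1 c).
Proof.
move=> /bij_inj G_inj /charfun_decomp f_decomp lam_once _ lam_cons D_acyclic.
split=> [d | k h1].
  exact: (Omega_F_components G_inj f_decomp lam_once lam_cons D_acyclic).
exact: (subFSR_Omega G_inj f_decomp lam_once lam_cons D_acyclic).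
Qed.
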